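(* In the unit-demand mechanism with an arbitrary discount function $\alpha:[0,1]\to[0,1]$ (described in the context), for every buyer $i$, every item $j$ and every $t\in[0,1]$, $$\Pr_{\mathbf v,\mathbf T}[\,j \text{ not sold before } t \mid T_i=t\,]\ \ge\ q_j(t).$$
   Context: Unit-demand setting: $n$ buyers, $m$ items; buyer $i$ has a random nonnegative value vector $(v_{ij})_j$, independent across buyers, and arrives at an independent time $T_i$ uniform on $[0,1]$. Nonnegative base prices $b_j$ are fixed. Mechanism: at time $t$ each unsold item $j$ has price $\alpha(t)b_j$; a buyer arriving at time $t$ buys an unsold item maximizing $v_{ij}-\alpha(t)b_j$ if the maximum is nonnegative (ties broken by a fixed deterministic rule), else buys nothing. $q_j(t)$ denotes the unconditional probability (over $\mathbf v,\mathbf T$) that item $j$ has not been sold before time $t$. *)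

From HB Require Import structures.
From mathcomp Require Import all_boot all_order all_algebra perm.
From mathcomp Require Import all_classical all_reals all_analysis.
Set Implicit Arguments. Unset Strict Implicit. Unset Printing Implicit Defensive.
Import Order.TTheory GRing.Theory Num.Theory.
Local Open Scope classical_set_scope.
Local Open Scope ring_scope.

Definition util (R : realType) (m : nat) (alpha : R -> R) (b : 'I_m -> R)
  (w : 'I_m -> R) (tk : R) (j : 'I_m) : R := w j - alpha tk * b j.

Definition select (R : realType) (m : nat) (alpha : R -> R) (b : 'I_m -> R)
  (pr : {perm 'I_m}) (w : 'I_m -> R) (tk : R) (S : {set 'I_m}) : option 'I_m :=
  let M := [set j in S | [forall j' in S,
              util alpha b w tk j' <= util alpha b w tk j]] in
  [pick j in M | [forall j' in M, (nat_of_ord (pr j) <= nat_of_ord (pr j'))%N]].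

Definition step (R : realType) (n m : nat) (alpha : R -> R) (b : 'I_m -> R)
  (pr : 'I_n -> {perm 'I_m}) (tau : 'I_n -> R) (v : 'I_n -> 'I_m -> R)
  (S : {set 'I_m}) (k : 'I_n) : {set 'I_m} :=
  match select alpha b (pr k) (v k) (tau k) S with
  | Some j => if 0 <= util alpha b (v k) (tau k) j then S :\ j else S
  | None => S
  end.

(* arrival order: by arrival time, (measure-zero) ties broken by index *)
Definition arrives_before (R : realType) (n : nat) (tau : 'I_n -> R)
  (a c : 'I_n) : bool :=
  (tau a < tau c) || ((tau a == tau c) && (nat_of_ord a <= nat_of_ord c)%N).

Definition arrivals_before (R : realType) (n : nat) (tau : 'I_n -> R) (t : R)
  : seq 'I_n :=
  sort (arrives_before tau) [seq k <- enum 'I_n | tau k < t].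

Definition unsold_before (R : realType) (n m : nat) (alpha : R -> R)
  (b : 'I_m -> R) (pr : 'I_n -> {perm 'I_m}) (tau : 'I_n -> R)
  (v : 'I_n -> 'I_m -> R) (t : R) : {set 'I_m} :=
  foldl (step alpha b pr tau v) (finset.setT : {set 'I_m}) (arrivals_before tau t).

(* mutual independence of the value vectors (v i)_i and the arrival times
   (T i)_i: product rule on all (generating) rectangle events *)
Definition indep_model d (Omega : measurableType d) (R : realType)
  (P : probability Omega R) (n m : nat)
  (v : 'I_n -> 'I_m -> Omega -> R) (T : 'I_n -> Omega -> R) : Prop :=
  forall (A : 'I_n -> 'I_m -> set R) (B : 'I_n -> set R),
    (forall i j, measurable (A i j)) -> (forall i, measurable (B i)) ->
    P (\bigcap_(i in [set: 'I_n])
         ((\bigcap_(j in [set: 'I_m]) (v i j @^-1` A i j)) `&` (T i @^-1` B i)))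
    = ((\prod_(i < n) P (\bigcap_(j in [set: 'I_m]) (v i j @^-1` A i j)))
       * (\prod_(i < n) P (T i @^-1` B i)))%E.

Definition uniform01 d (Omega : measurableType d) (R : realType)
  (P : probability Omega R) (X : Omega -> R) : Prop :=
  forall B : set R, measurable B ->
    P (X @^-1` B) = (@lebesgue_measure R) (B `&` [set x : R | 0 <= x <= 1]).

Definition q_unsold d (Omega : measurableType d) (R : realType)
  (P : probability Omega R) (n m : nat) (alpha : R -> R) (b : 'I_m -> R)
  (pr : 'I_n -> {perm 'I_m}) (v : 'I_n -> 'I_m -> Omega -> R)
  (T : 'I_n -> Omega -> R) (j : 'I_m) (t : R) : \bar R :=
  P [set w | j \in unsold_before alpha b pr (fun k => T k w)
                                 (fun k l => v k l w) t].

(* Pr[item j not sold before t | T_i = t]: by independence of T_i from the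
   rest, the (regular) conditional law is obtained by fixing T_i := t *)
Definition q_unsold_given_arrival d (Omega : measurableType d) (R : realType)
  (P : probability Omega R) (n m : nat) (alpha : R -> R) (b : 'I_m -> R)
  (pr : 'I_n -> {perm 'I_m}) (v : 'I_n -> 'I_m -> Omega -> R)
  (T : 'I_n -> Omega -> R) (i : 'I_n) (j : 'I_m) (t : R) : \bar R :=
  P [set w | j \in unsold_before alpha b pr
                     (fun k => if k == i then t else T k w)
                     (fun k l => v k l w) t].

From HB Require Import structures.
From mathcomp Require Import all_boot all_order all_algebra perm.
From mathcomp Require Import all_classical all_reals all_analysis.
Import measurable_realfun.
Import Order.TTheory GRing.Theory Num.Theory.
Set Implicit Arguments. Unset Strict Implicit. Unset Printing Implicit Defensive.
Local Open Scope classical_set_scope.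
Local Open Scope ring_scope.

(* Fixing T_i := t removes buyer i from the arrivals before t, and the claim
   holds outcome by outcome: removing a buyer from the market can only
   enlarge the set of items unsold before t.  This rests on an invariant of
   greedy unit-demand selling: if the unsold sets of two runs differ by at
   most one extra item x, they still do after the next buyer arrives.  That
   buyer either picks the same item in both runs, or picks x in the larger
   run; then whatever he picks in the smaller run, an item worth less to him
   than x, becomes the new extra item.  Removing a buyer creates exactly
   such a pair of runs. *)

Section Selection.
Variables (R : realType) (m : nat) (alpha : R -> R) (b : 'I_m -> R)
  (pr : {perm 'I_m}) (w : 'I_m -> R) (tk : R).
Local Notation u := (util alpha b w tk).
Local Notation sel := (select alpha b pr w tk).

Lemma select_max (S : {set 'I_m}) y :
  sel S = Some y -> y \in S /\ {in S, forall j, u j <= u y}.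
Proof.
rewrite /select; case: pickP => // z /andP[+ _] [<-].
by rewrite inE => /andP[zS /forall_inP zmax].
Qed.

Lemma select_nonempty (S : {set 'I_m}) y : y \in S -> sel S <> None.
Proof.
move=> yS; pose M := [set j in S | [forall j' in S, u j' <= u j]].
have [z zS zmax] := @arg_maxP _ R _ y (fun j => j \in S) u yS.
have zM : z \in M by rewrite inE zS; apply/forall_inP.
have [z' z'M z'min] := @arg_minnP _ z (fun j => j \in M) (fun j => nat_of_ord (pr j)) zM.
rewrite /select -/M; case: pickP => // /(_ z').
by rewrite z'M /=; move/forall_inP: z'min => ->.
Qed.

Lemma select_subset (S S' : {set 'I_m}) y :
  S \subset S' -> sel S' = Some y -> y \in S -> sel S = Some y.
Proof.
move=> sSS' selS' yS; have [yS' ymax] := select_max selS'.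
pose M (A : {set 'I_m}) := [set j in A | [forall j' in A, u j' <= u j]].
have sMM : M S \subset M S'.
  apply/fintype.subsetP => j; rewrite !inE => /andP[jS /forall_inP jmax].
  rewrite (fintype.subsetP sSS' _ jS); apply/forall_inP => j' /ymax/le_trans; apply.
  exact: jmax.
have yM : y \in M S.
  by rewrite inE yS; apply/forall_inP => j' /(fintype.subsetP sSS')/ymax.
move: selS'; rewrite /select -!/(M _).
case: pickP => // z /andP[_ /forall_inP zmin] [zy]; subst z.
case: pickP => [z' /andP[z'M /forall_inP z'min] | /(_ y)]; last first.
  by rewrite yM => /negbT/negP[]; apply/forall_inP => j /(fintype.subsetP sMM)/zmin.
have prz' : pr z' = pr y.
  by apply/val_inj/eqP; rewrite eqn_leq z'min // zmin // (fintype.subsetP sMM).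
by rewrite (perm_inj prz').
Qed.

End Selection.

Definition extends_by_one (T : finType) (S S' : {set T}) :=
  S' = S \/ exists x, S' = x |: S.

Lemma extends_by_one_subset (T : finType) (S S' : {set T}) :
  extends_by_one S S' -> S \subset S'.
Proof. by case=> [->|[x ->]]; [exact: subxx | exact: finset.subsetUr]. Qed.

Section Step.
Variables (R : realType) (n m : nat) (alpha : R -> R) (b : 'I_m -> R)
  (pr : 'I_n -> {perm 'I_m}) (tau : 'I_n -> R) (v : 'I_n -> 'I_m -> R).
Local Notation st := (step alpha b pr tau v).

Lemma step_extends_by_one S k : extends_by_one (st S k) S.
Proof.
rewrite /step; case sel: select => [z|]; last by left.
case: ifP => _; last by left.
by right; exists z; rewrite finset.setD1K //; case: (select_max sel).
Qed.

Lemma extends_by_one_step S S' k :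
  extends_by_one S S' -> extends_by_one (st S k) (st S' k).
Proof.
case=> [->|[x ->{S'}]]; first by left.
have [xS|xNS] := boolP (x \in S).
  by rewrite (finset.setUidPr _); [left | rewrite finset.sub1set].
have sSxS : S \subset x |: S by exact: finset.subsetUr.
rewrite /step; case sel': (select _ _ _ _ _ (x |: S)) => [y|]; last first.
  by case: (select_nonempty (setU11 x S) sel').
have [yxS ymax] := select_max sel'.
have [eyx|yx] := eqVneq y x; last first.
  have yS : y \in S by move: yxS; rewrite !inE (negbTE yx).
  rewrite (select_subset sSxS sel' yS); case: ifP => _; right; exists x => //.
  by apply/setP => z; rewrite !inE; case: (eqVneq z x) => [->|] //=; rewrite eq_sym yx.
subst y.
case: ifP => ux.
  by rewrite finset.setU1K //; apply: step_extends_by_one.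
case sel: select => [z|]; last by right; exists x.
have zS := (select_max sel).1.
(* z is worth at most x to this buyer, and x was not worth buying *)
case: ifP => uz; last by right; exists x.
by move: ux; rewrite (le_trans uz (ymax z (fintype.subsetP sSxS _ zS))).
Qed.

Lemma extends_by_one_foldl L S S' :
  extends_by_one S S' -> extends_by_one (foldl st S L) (foldl st S' L).
Proof. by elim: L S S' => //= k L IH S S' ?; apply/IH/extends_by_one_step. Qed.

Lemma foldl_step_remove L1 k L2 S :
  foldl st S (L1 ++ k :: L2) \subset foldl st S (L1 ++ L2).
Proof.
rewrite !foldl_cat /=; apply/extends_by_one_subset/extends_by_one_foldl.
exact: step_extends_by_one.
Qed.

Lemma foldl_step_filter_buyer L (i : 'I_n) S : uniq L ->
  foldl st S L \subset foldl st S [seq k <- L | k != i].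
Proof.
have filter_id L0 : i \notin L0 -> [seq k <- L0 | k != i] = L0.
  by move=> iNL0; apply/all_filterP/allP => k kL0; apply: contraNneq iNL0 => <-.
have [iL uL|iNL _] := boolP (i \in L); last by rewrite filter_id.
case/splitPr: iL uL => L1 L2; rewrite cat_uniq /= negb_or.
move=> /and4P[_ /andP[iNL1 _] iNL2 _].
by rewrite filter_cat /= eqxx !filter_id //; apply: foldl_step_remove.
Qed.

End Step.

Section ArrivalOrder.
Variables (R : realType) (n : nat) (tau : 'I_n -> R).
Local Notation before := (arrives_before tau).

Lemma arrives_before_total : total before.
Proof. by move=> a c; rewrite /arrives_before; case: ltgtP => //= _; exact: leq_total. Qed.

Lemma arrives_before_trans : transitive before.
Proof.
move=> y x z; rewrite /arrives_before.
move=> /orP[xy|/andP[/eqP-> xy]] /orP[yz|/andP[/eqP<- yz]]; apply/orP.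
- by left; exact: lt_trans xy yz.
- by left.
- by left.
- by right; rewrite eqxx (leq_trans xy yz).
Qed.

Lemma arrives_before_anti : antisymmetric before.
Proof.
move=> x y; rewrite /arrives_before.
case: ltgtP => //= _ /andP[xy yx].
by apply/val_inj/eqP; rewrite eqn_leq xy yx.
Qed.

End ArrivalOrder.

Definition arrive_at (R : realType) (n : nat) (tau : 'I_n -> R) (i : 'I_n) (t : R)
  : 'I_n -> R := fun k => if k == i then t else tau k.

Lemma arrivals_before_arrive_at (R : realType) (n : nat) (tau : 'I_n -> R)
  (i : 'I_n) (t : R) :
  arrivals_before (arrive_at tau i t) t = [seq k <- arrivals_before tau t | k != i].
Proof.
rewrite /arrivals_before filter_sort; last first.
- exact: arrives_before_trans.
- exact: arrives_before_total.
have -> : [seq k <- [seq k <- enum 'I_n | tau k < t] | k != i] =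
          [seq k <- enum 'I_n | arrive_at tau i t k < t].
  rewrite -filter_predI; apply: eq_filter => k /=; rewrite /arrive_at.
  by case: (eqVneq k i) => [->|] //=; rewrite ltxx.
set L := [seq k <- enum 'I_n | _].
have iNL : all (predC1 i) L.
  by apply/allP => k; rewrite mem_filter /arrive_at; case: eqVneq => [->|]; rewrite ?ltxx.
apply: (sorted_eq (@arrives_before_trans _ _ _) (@arrives_before_anti _ _ _)).
- rewrite (@eq_in_sorted _ (predC1 i) _ (arrives_before (arrive_at tau i t))).
  + exact/sort_sorted/arrives_before_total.
  + by move=> a c /= ai ci; rewrite /arrives_before /arrive_at (negbTE ai) (negbTE ci).
  + by rewrite all_sort.
- exact/sort_sorted/arrives_before_total.
- by rewrite perm_sort perm_sym perm_sort.
Qed.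

Lemma unsold_before_arrive_at (R : realType) (n m : nat) (alpha : R -> R)
  (b : 'I_m -> R) (pr : 'I_n -> {perm 'I_m}) (tau : 'I_n -> R)
  (v : 'I_n -> 'I_m -> R) (i : 'I_n) (t : R) :
  unsold_before alpha b pr tau v t \subset
  unsold_before alpha b pr (arrive_at tau i t) v t.
Proof.
rewrite /unsold_before arrivals_before_arrive_at.
have step_arrive_at L S : all (predC1 i) L ->
    foldl (step alpha b pr (arrive_at tau i t) v) S L =
    foldl (step alpha b pr tau v) S L.
  elim: L S => //= k L IH S /andP[ki iNL].
  by rewrite IH // /step /arrive_at (negbTE ki).
rewrite step_arrive_at; last by apply/allP => k; rewrite mem_filter => /andP[].
by apply: foldl_step_filter_buyer; rewrite sort_uniq filter_uniq ?enum_uniq.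
Qed.

Definition outcome_profile (R : realType) (n m : nat) (alpha : R -> R)
  (b : 'I_m -> R) (tau : 'I_n -> R) (v : 'I_n -> 'I_m -> R) (t : R) :=
  let u k := util alpha b (v k) (tau k) in
  ([ffun p : 'I_n * 'I_m * 'I_m => u p.1.1 p.1.2 <= u p.1.1 p.2],
   [ffun p : 'I_n * 'I_m => 0 <= u p.1 p.2],
   [ffun k : 'I_n => tau k < t],
   [ffun p : 'I_n * 'I_n => tau p.1 < tau p.2],
   [ffun p : 'I_n * 'I_n => tau p.1 == tau p.2]).

Lemma unsold_before_profile (R : realType) (n m : nat) (alpha : R -> R)
  (b : 'I_m -> R) (pr : 'I_n -> {perm 'I_m}) (tau1 tau2 : 'I_n -> R)
  (v1 v2 : 'I_n -> 'I_m -> R) (t : R) :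
  outcome_profile alpha b tau1 v1 t = outcome_profile alpha b tau2 v2 t ->
  unsold_before alpha b pr tau1 v1 t = unsold_before alpha b pr tau2 v2 t.
Proof.
move=> [/ffunP ule /ffunP upos /ffunP early /ffunP tau_lt /ffunP tau_eq].
rewrite /unsold_before /arrivals_before.
have -> : [seq k <- enum 'I_n | tau1 k < t] = [seq k <- enum 'I_n | tau2 k < t].
  by apply: eq_filter => k; have := early k; rewrite !ffunE.
have -> : arrives_before tau1 = arrives_before tau2.
  apply: boolp.funext => a; apply: boolp.funext => c.
  by have := tau_lt (a, c); have := tau_eq (a, c); rewrite !ffunE /arrives_before /= => -> ->.
congr foldl; apply: boolp.funext => S; apply: boolp.funext => k; rewrite /step /select.
have -> : [set j in S | [forall j' in S, util alpha b (v1 k) (tau1 k) j'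
                                          <= util alpha b (v1 k) (tau1 k) j]]
        = [set j in S | [forall j' in S, util alpha b (v2 k) (tau2 k) j'
                                          <= util alpha b (v2 k) (tau2 k) j]].
  apply/setP => j; rewrite !inE; congr (_ && _); apply: eq_forallb => j'.
  by have := ule (k, j', j); rewrite !ffunE /= => ->.
by case: pickP => // z _; have := upos (k, z); rewrite !ffunE /= => ->.
Qed.

Section FiniteValued.
Variables (d : measure_display) (Omega : measurableType d).

Definition measurable_fibers (F : finType) (f : Omega -> F) :=
  forall y, measurable (f @^-1` [set y]).

Lemma measurable_fibers_pair (F G : finType) (f : Omega -> F) (g : Omega -> G) :
  measurable_fibers f -> measurable_fibers g ->
  measurable_fibers (fun w => (f w, g w)).
Proof.
move=> mf mg [y z].
have -> : (fun w => (f w, g w)) @^-1` [set (y, z)] =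
          f @^-1` [set y] `&` g @^-1` [set z].
  by apply/seteqP; split => w /=; [case=> -> -> | case=> -> ->].
exact: measurableI.
Qed.

Lemma measurable_fibers_ffun (X : finType) (h : Omega -> X -> bool) :
  (forall x, measurable_fun setT (h^~ x)) ->
  measurable_fibers (fun w => [ffun x => h w x]).
Proof.
move=> mh y.
have -> : (fun w => [ffun x => h w x]) @^-1` [set y] =
          \bigcap_(x in [set: X]) (h^~ x @^-1` [set y x]).
  apply/seteqP; split => w /=; first by move=> <- x _; rewrite ffunE.
  by move=> hw; apply/ffunP => x; rewrite ffunE; exact: hw.
apply: fin_bigcap_measurable; first exact: finite_finset.
by move=> x _; rewrite -[_ @^-1` _]setTI; exact: mh.
Qed.

Lemma measurable_fibers_invariant (F : finType) (f : Omega -> F) (E : set Omega) :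
  measurable_fibers f -> (forall w w', f w = f w' -> E w -> E w') ->
  measurable E.
Proof.
move=> mf Einv.
have -> : E = \bigcup_(y in f @` E) f @^-1` [set y].
  apply/seteqP; split => [w Ew | w [_ [w' Ew' <-]] /= fw]; first by exists (f w).
  exact: Einv Ew'.
by apply: fin_bigcup_measurable => // *; exact: finite_finset.
Qed.

End FiniteValued.

Lemma measurable_unsold_before d (Omega : measurableType d) (R : realType)
  (n m : nat) (alpha : R -> R) (b : 'I_m -> R) (pr : 'I_n -> {perm 'I_m})
  (tau : 'I_n -> Omega -> R) (v : 'I_n -> 'I_m -> Omega -> R) (t : R) (j : 'I_m) :
  measurable_fun setT alpha -> (forall k, measurable_fun setT (tau k)) ->
  (forall k l, measurable_fun setT (v k l)) ->
  measurable [set w | j \in unsold_before alpha b pr (tau^~ w) (fun k l => v k l w) t].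
Proof.
move=> malpha mtau mv.
have mu k l : measurable_fun setT (fun w => util alpha b (v k ^~ w) (tau k w) l).
  apply/(measurable_funB (mv k l))/measurable_funM => //.
  exact: measurableT_comp malpha (mtau k).
apply: (@measurable_fibers_invariant _ _ _
  (fun w => outcome_profile alpha b (tau^~ w) (fun k l => v k l w) t)).
  rewrite /outcome_profile; repeat apply: measurable_fibers_pair;
    apply: measurable_fibers_ffun => p.
  - exact: measurable_fun_ler.
  - exact: measurable_fun_ler.
  - exact: measurable_fun_ltr.
  - exact: measurable_fun_ltr.
  - exact: measurable_fun_eqr.
by move=> w w' /(unsold_before_profile pr) unsold_eq; rewrite /= unsold_eq.
Qed.

Theorem lemma3 (d : measure_display) (Omega : measurableType d) (R : realType)
  (P : probability Omega R) (n m : nat)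
  (v : 'I_n -> 'I_m -> Omega -> R) (T : 'I_n -> Omega -> R)
  (b : 'I_m -> R) (alpha : R -> R) (pr : 'I_n -> {perm 'I_m}) :
  (forall i j, measurable_fun setT (v i j)) ->
  (forall i, measurable_fun setT (T i)) ->
  (forall i j w, 0 <= v i j w) ->
  indep_model P v T ->
  (forall i, uniform01 P (T i)) ->
  (forall j, 0 <= b j) ->
  (forall s, 0 <= s <= 1 -> 0 <= alpha s <= 1) ->
  measurable_fun setT alpha ->
  forall (i : 'I_n) (j : 'I_m) (t : R), 0 <= t <= 1 ->
    (q_unsold P alpha b pr v T j t
       <= q_unsold_given_arrival P alpha b pr v T i j t)%E.
Proof.
move=> mv mT _ _ _ _ _ malpha i j t _.
have mT_at k : measurable_fun setT (fun w => arrive_at (T^~ w) i t k).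
  by rewrite /arrive_at; case: (k == i); [exact: measurable_cst | exact: mT].
apply: le_measure; rewrite ?inE.
- exact: measurable_unsold_before.
- exact: (measurable_unsold_before _ _ _ _ malpha mT_at).
- move=> w /=; exact: (fintype.subsetP (unsold_before_arrive_at _ _ _ _ _ i t)).
Qed.
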